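(* Let $T$ be a spanning tree of $K_n$. For each edge $e$ of $T$, let $A_e$ be the event that $e$ is an edge of a spanning tree of $K_n$ drawn uniformly at random. Then the line graph $\mathcal{L}(T)$ is a negative dependency graph for the events $\{A_e\}_{e \in T}$.
   Context: Given events $A_1,\dots,A_N$, a negative dependency graph is a simple graph $G=([N],E)$ such that for all $i\in[N]$ and all $S\subseteq\{j\in[N] : \{i,j\}\notin E\}$, if $\Pr[\bigwedge_{j\in S}\bar A_j]\neq 0$ then $\Pr[A_i \mid \bigwedge_{j\in S}\bar A_j]\le \Pr[A_i]$ (here the events are indexed by the edges of $T$). The line graph $\mathcal{L}(T)$ has vertex set the edges of $T$, two edges adjacent if they share an endpoint. *)

From mathcomp Require Import all_boot all_order all_algebra.
Set Implicit Arguments. Unset Strict Implicit. Unset Printing Implicit Defensive.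
Import Order.TTheory GRing.Theory Num.Theory.
Local Open Scope ring_scope.

(* Vertices of K_n are 'I_n; an edge of K_n is a 2-element subset of 'I_n.
   A subgraph of K_n on all n vertices is given by its edge set. *)
Definition edge_of_Kn (n : nat) (e : {set 'I_n}) : bool := #|e| == 2%N.

Definition adj_of (n : nat) (t : {set {set 'I_n}}) : rel 'I_n :=
  fun x y => [set x; y] \in t.

Definition connected_spanning (n : nat) (t : {set {set 'I_n}}) : bool :=
  [forall u : 'I_n, forall v : 'I_n, connect (adj_of t) u v].

(* acyclic: no edge lies on a cycle, i.e. for every edge {u,v} of t, u and v
   are not connected in t with that edge removed *)
Definition acyclic (n : nat) (t : {set {set 'I_n}}) : bool :=
  [forall u : 'I_n, forall v : 'I_n, ([set u; v] \in t) && (u != v) ==>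
    ~~ connect (adj_of (t :\ [set u; v])) u v].

Definition spanning_tree (n : nat) (t : {set {set 'I_n}}) : bool :=
  [&& [forall e in t, edge_of_Kn e], connected_spanning t & acyclic t].

Definition spanning_trees (n : nat) : {set {set {set 'I_n}}} :=
  [set t | spanning_tree t].

Definition Pr (Om : finType) (S : {set Om}) (E : {set Om}) : rat :=
  (#|E :&: S|)%:R / (#|S|)%:R.

Definition negative_dependency_graph (Om I : finType) (S : {set Om})
    (D : {set I}) (adj : rel I) (A : I -> {set Om}) : Prop :=
  forall i, i \in D ->
  forall Sj : {set I}, Sj \subset [set j in D | ~~ adj i j] ->
    let B := \bigcap_(j in Sj) ~: A j in
    Pr S B != 0 ->
    Pr S (A i :&: B) / Pr S B <= Pr S (A i).

Definition edge_event (n : nat) (e : {set 'I_n}) : {set {set {set 'I_n}}} :=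
  [set t : {set {set 'I_n}} | e \in t].

Definition line_adj (n : nat) : rel {set 'I_n} :=
  fun e f => (e != f) && (e :&: f != set0).

From mathcomp Require Import all_boot all_order all_algebra.
From mathcomp Require Import zify.
Import GRing.Theory Num.Theory.
Set Implicit Arguments. Unset Strict Implicit. Unset Printing Implicit Defensive.

(* Fix the edge uv of T. Every edge of T not adjacent to uv meets neither
   u nor v, and for any set F of such edges the proportion of spanning trees
   containing uv among those avoiding F is exactly 2/n; conditioning on the
   absence of F therefore leaves Pr[A_uv] unchanged.
   The value 2/n comes from an exchange argument among the trees avoiding F.
   In a tree t without uv exactly two edges f with one end in {u, v} separate
   u from v (the end edges of the u-v path), and t - f + uv is a tree. In a tree
   t with uv, each of the n - 2 other vertices lies on the side of u or of v in
   t - uv and is joined to the opposite side by an edge f, giving the tree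
   t - uv + f. The two exchanges are mutually inverse and never use an edge of
   F, so 2 #{trees without uv} = (n - 2) #{trees with uv}. *)

Section Graphs.
Variable n : nat.
Implicit Types (s t : {set {set 'I_n}}) (e f g : {set 'I_n}) (a b u v x y : 'I_n).

Local Notation linked s := (connect (adj_of s)).

Lemma adj_of_sym s : symmetric (adj_of s).
Proof. by move=> x y; rewrite /adj_of setUC. Qed.

Lemma linked_sym s x y : linked s x y = linked s y x.
Proof. exact: (sym_connect_sym (adj_of_sym s)). Qed.

Lemma linked_sub s s' x y : s \subset s' -> linked s x y -> linked s' x y.
Proof. by move=> /subsetP ss'; apply: connect_sub => p q spq; apply/connect1/ss'. Qed.

Lemma edge_of_Kn_set2 x y : edge_of_Kn [set x; y] = (x != y).
Proof. by rewrite /edge_of_Kn cards2; case: (x != y). Qed.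

Lemma eq_set2 a b x y : [set x; y] = [set a; b] ->
  (x = a /\ y = b) \/ (x = b /\ y = a).
Proof.
move=> xy_ab.
have /set2P[] : x \in [set a; b] by rewrite -xy_ab set21.
all: have /set2P[] : y \in [set a; b] by rewrite -xy_ab set22.
all: move=> ? ?; subst x y; rewrite ?setUid in xy_ab; do ?by [left | right].
all: suff -> : a = b by left.
- by apply/esym/set1P; rewrite xy_ab set22.
- by apply/set1P; rewrite xy_ab set21.
Qed.

Lemma linked_setD1 s a b x y : linked s x y ->
  [\/ linked (s :\ [set a; b]) x y,
      linked (s :\ [set a; b]) x a /\ linked (s :\ [set a; b]) b y |
      linked (s :\ [set a; b]) x b /\ linked (s :\ [set a; b]) a y].
Proof.
set r := adj_of (s :\ [set a; b]).
move/connectP=> [p + ->]; elim: p x => [|z p IHp] x /=; first by move=> _; apply: Or31.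
case/andP=> sxz /IHp; case: (eqVneq [set x; z] [set a; b]) => [/eq_set2 | xz_ab].
  case=> [[-> ->] | [-> ->]] [zy | [_ zy] | [_ zy]];
  first [by apply: Or31 | by apply: Or32; rewrite connect0 | by apply: Or33; rewrite connect0].
have rxz : connect r x z by apply: connect1; rewrite /r /adj_of !inE xz_ab.
case=> [zy | [za b_y] | [zb a_y]].
- by apply: Or31; apply: connect_trans rxz zy.
- by apply: Or32; split=> //; apply: connect_trans rxz za.
- by apply: Or33; split=> //; apply: connect_trans rxz zb.
Qed.

Lemma linked_setD1_ends s a b z : linked s a z ->
  linked (s :\ [set a; b]) a z || linked (s :\ [set a; b]) b z.
Proof. by case/(linked_setD1 a b) => [-> | [_ ->] | [_ ->]]; rewrite ?orbT. Qed.

Definition joins_components s e := [exists x in e, exists y in e, ~~ linked s x y].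

Lemma joins_componentsE s x y : joins_components s [set x; y] = ~~ linked s x y.
Proof.
apply/exists_inP/idP => [[p /set2P pxy /exists_inP [q /set2P qxy]] | nxy].
  by case: pxy qxy => -> [] ->; rewrite // ?connect0 // linked_sym.
by exists x; rewrite ?set21 //; apply/exists_inP; exists y; rewrite ?set22.
Qed.

Lemma joins_components_notin s e : edge_of_Kn e -> joins_components s e -> e \notin s.
Proof.
by case/cards2P=> x [y [_ ->]]; rewrite joins_componentsE; apply: contra => xys; apply: connect1.
Qed.

Lemma edge_other_end f x : edge_of_Kn f -> x \in f -> exists2 c, x != c & f = [set x; c].
Proof.
case/cards2P=> a [b [ab ->]] /set2P [-> | ->]; first by exists b.
by exists a; rewrite 1?setUC // eq_sym.
Qed.

Lemma tree_edge t f : spanning_tree t -> f \in t -> edge_of_Kn f.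
Proof. by case/and3P=> /forall_inP + _ _; apply. Qed.

Lemma tree_linked t x y : spanning_tree t -> linked t x y.
Proof. by case/and3P=> _ /forallP/(_ x)/forallP/(_ y). Qed.

Lemma tree_acyclic t : spanning_tree t -> acyclic t.
Proof. by case/and3P. Qed.

Lemma acyclic_edge_cut t x y : acyclic t -> [set x; y] \in t -> x != y ->
  ~~ linked (t :\ [set x; y]) x y.
Proof. by move=> /forallP/(_ x)/forallP/(_ y)/implyP ac xyt xy; apply: ac; rewrite xyt. Qed.

Lemma tree_edge_joins t f : spanning_tree t -> f \in t -> joins_components (t :\ f) f.
Proof.
move=> tt ft; have /cards2P [x [y [xy fxy]]] := tree_edge tt ft; subst f.
by rewrite joins_componentsE; apply: acyclic_edge_cut (tree_acyclic tt) ft xy.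
Qed.

Lemma connected_exchange t a b x y : connected_spanning t ->
  ~~ linked (t :\ [set a; b]) x y -> connected_spanning ([set x; y] |: t :\ [set a; b]).
Proof.
move=> /forallP tc nxy; set s := t :\ [set a; b]; set t' := _ |: s.
have ss' : s \subset t' by apply: subsetUr.
have xy' : linked t' x y by apply: connect1; rewrite /adj_of setU11.
have ends z : linked s a z || linked s b z.
  by apply: linked_setD1_ends; have /forallP := tc a; apply.
have ab' : linked t' a b.
  case/orP: (ends x) => ax; case/orP: (ends y) => ay.
  - by rewrite linked_sym in ax; rewrite (connect_trans ax ay) in nxy.
  - apply: connect_trans (linked_sub ss' ax) (connect_trans xy' _).
    by rewrite linked_sym; apply: linked_sub ss' ay.
  - apply: connect_trans (linked_sub ss' ay) _; rewrite linked_sym.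
    exact: connect_trans (linked_sub ss' ax) xy'.
  - by rewrite linked_sym in ax; rewrite (connect_trans ax ay) in nxy.
have a_any z : linked t' a z.
  case/orP: (ends z) => hz; first exact: linked_sub ss' hz.
  exact: connect_trans ab' (linked_sub ss' hz).
by apply/forallP => p; apply/forallP => q; apply: connect_trans (a_any q); rewrite linked_sym.
Qed.

Lemma acyclic_exchange t f x y : acyclic t -> [set x; y] \notin t ->
  ~~ linked (t :\ f) x y -> acyclic ([set x; y] |: t :\ f).
Proof.
move=> ac gt nxy; set g := [set x; y]; set t' := g |: t :\ f.
apply/forallP => p; apply/forallP => q; apply/implyP => /andP [pqt' pq].
have [pqg | pqg] := eqVneq [set p; q] g.
  have -> : t' :\ [set p; q] = t :\ f by rewrite pqg setU1K // !inE (negbTE gt) andbF.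
  by case: (eq_set2 pqg) => [[-> ->] | [-> ->]]; rewrite // linked_sym.
have pqf : [set p; q] \in t :\ f by move: pqt'; rewrite in_setU1 (negbTE pqg).
have sub_pq : t' :\ [set p; q] :\ g \subset t :\ [set p; q].
  apply/subsetP => k; rewrite !inE => /and3P [kg -> /=].
  by rewrite (negbTE kg) => /andP [].
have sub_f : t' :\ [set p; q] :\ g \subset t :\ f.
  by apply/subsetP => k; rewrite !inE => /and3P [kg _]; rewrite (negbTE kg).
have linked_pq : linked (t :\ f) p q by apply: connect1.
have pqt : [set p; q] \in t by case/setD1P: pqf.
apply/negP => /(linked_setD1 x y) [lpq | [px yq] | [py xq]].
- by move: (acyclic_edge_cut ac pqt pq); rewrite (linked_sub sub_pq lpq).
- have xp : linked (t :\ f) x p by rewrite linked_sym (linked_sub sub_f px).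
  have qy : linked (t :\ f) q y by rewrite linked_sym (linked_sub sub_f yq).
  by rewrite (connect_trans xp (connect_trans linked_pq qy)) in nxy.
- have qp : linked (t :\ f) q p by rewrite linked_sym.
  have xq' := linked_sub sub_f xq; have py' := linked_sub sub_f py.
  by rewrite (connect_trans xq' (connect_trans qp py')) in nxy.
Qed.

Lemma tree_exchange t f g : spanning_tree t -> f \in t -> edge_of_Kn g -> g \notin t ->
  joins_components (t :\ f) g -> spanning_tree (g |: t :\ f).
Proof.
move=> tt ft /cards2P [x [y [xy ->]]] gt; rewrite joins_componentsE => nxy.
have /cards2P [a [b [_ fab]]] := tree_edge tt ft; rewrite fab in nxy *.
case/and3P: tt => /forall_inP ed tc ac; apply/and3P; split.
- apply/forall_inP => k; rewrite !inE => /orP [/eqP -> | /andP [_ /ed //]].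
  by rewrite edge_of_Kn_set2.
- exact: connected_exchange.
- exact: acyclic_exchange.
Qed.

Lemma tree_exchange_reversible t f g : spanning_tree t -> f \in t -> edge_of_Kn g -> g \notin t ->
  joins_components (t :\ f) g ->
  [/\ spanning_tree (g |: t :\ f), f \notin g |: t :\ f,
      joins_components ((g |: t :\ f) :\ g) f & f |: (g |: t :\ f) :\ g = t].
Proof.
move=> tt ft eg gt jg.
have drop_g : (g |: t :\ f) :\ g = t :\ f by rewrite setU1K // in_setD1 (negbTE gt) andbF.
rewrite drop_g setD1K //; split; [exact: tree_exchange | | exact: tree_edge_joins | by []].
by rewrite !inE eqxx /= orbF; apply: contraNneq gt => <-.
Qed.

(* The first edge of a duplicate-free path from u to v. *)
Lemma tree_cut_edge_exists t u v : spanning_tree t -> u != v ->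
  exists a, [/\ [set u; a] \in t, u != a & ~~ linked (t :\ [set u; a]) u v].
Proof.
move=> tt; have /connectP [p + ->] := tree_linked u v tt.
case/shortenP=> -[|a q] /=; first by rewrite eqxx.
move=> /andP [uat aq] /andP [+ _] _.
rewrite inE negb_or => /andP [ua uq] _; exists a; split => //.
have a_last : linked (t :\ [set u; a]) a (last a q).
  apply/connectP; exists q => //; apply: (sub_in_path (P := [pred z | z != u])) aq.
  - move=> x y xu yu; rewrite /adj_of in_setD1 => ->; rewrite andbT.
    apply: contraNneq xu => /(congr1 (fun e => u \in e)); rewrite set21.
    by case/set2P=> [-> // | uy]; move: yu; rewrite inE -uy eqxx.
  - rewrite /= eq_sym ua; apply/allP => z zq /=.
    by apply: contraNneq uq => <-.
apply/negP => u_last; have := acyclic_edge_cut (tree_acyclic tt) uat ua.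
by rewrite (connect_trans u_last) // linked_sym.
Qed.

Lemma tree_cut_edge_uniq t u v a b : spanning_tree t ->
  [set u; a] \in t -> u != a -> ~~ linked (t :\ [set u; a]) u v ->
  [set u; b] \in t -> u != b -> ~~ linked (t :\ [set u; b]) u v -> a = b.
Proof.
move=> tt uat ua na ubt ub nb; apply/eqP/negPn/negP => ab.
have ac_ua := acyclic_edge_cut (tree_acyclic tt) uat ua.
have ub_ua : [set u; b] != [set u; a].
  by apply: contraNneq ab => /eq_set2 [[_ ->] // | [ua' _]]; rewrite ua' eqxx in ua.
have av : linked (t :\ [set u; a]) a v.
  by case: (linked_setD1 u a (tree_linked u v tt)) => [uv' | [_ //] | [_ uv']];
     rewrite uv' in na.
have sub_b : t :\ [set u; a] :\ [set u; b] \subset t :\ [set u; b].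
  by apply/subsetP => k; rewrite !inE => /and3P [-> _ ->].
have sub_a : t :\ [set u; a] :\ [set u; b] \subset t :\ [set u; a].
  by apply/subsetP => k; rewrite !inE => /and3P [_ -> ->].
case/(linked_setD1 u b): av => [av | [au _] | [_ uv']].
- have uab : linked (t :\ [set u; b]) u a.
    by apply: connect1; rewrite /adj_of in_setD1 eq_sym ub_ua.
  by rewrite (connect_trans uab (linked_sub sub_b av)) in nb.
- by rewrite linked_sym (linked_sub sub_a au) in ac_ua.
- by rewrite (linked_sub sub_a uv') in na.
Qed.

End Graphs.

Section CutAndReconnect.
Variables (n : nat) (u v : 'I_n).
Hypothesis uv : u != v.
Implicit Types (t : {set {set 'I_n}}) (f : {set 'I_n}) (c w : 'I_n).

Local Notation linked s := (connect (adj_of s)).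
Local Notation e := [set u; v].

Definition incident_once := [set f | edge_of_Kn f && ((u \in f) (+) (v \in f))].

Definition cut_edges t :=
  [set f in incident_once | (f \in t) && joins_components (t :\ f) e].

Definition reconnecting_edges t :=
  [set f in incident_once | joins_components (t :\ e) f].

Lemma incident_once_u c : ([set u; c] \in incident_once) = (c != u) && (c != v).
Proof.
rewrite !inE edge_of_Kn_set2 eqxx addTb (eq_sym v u) (negbTE uv) /=.
by rewrite (eq_sym c u) (eq_sym c v).
Qed.

Lemma incident_once_v c : ([set v; c] \in incident_once) = (c != u) && (c != v).
Proof.
rewrite !inE edge_of_Kn_set2 eqxx (negbTE uv) /= addbT.
by rewrite andbC (eq_sym c u) (eq_sym c v).
Qed.

Lemma incident_once_set2 f : f \in incident_once ->
  exists2 c, (c != u) && (c != v) & f = [set u; c] \/ f = [set v; c].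
Proof.
move=> fI; move: (fI); rewrite inE => /andP [ef]; case: (boolP (u \in f)) => [uf _ | _ /= vf].
  have [c _ fE] := edge_other_end ef uf.
  by exists c; [rewrite -incident_once_u -fE | left].
have [c _ fE] := edge_other_end ef vf.
by exists c; [rewrite -incident_once_v -fE | right].
Qed.

Lemma edge_notin_incident_once : e \notin incident_once.
Proof. by rewrite !inE !eqxx /= orbT andbF. Qed.

Lemma card_cut_edges t : spanning_tree t -> e \notin t -> #|cut_edges t| = 2.
Proof.
move=> tt et; have vu : v != u by rewrite eq_sym.
have [a [uat ua na]] := tree_cut_edge_exists tt uv.
have [b [vbt vb nb]] := tree_cut_edge_exists tt vu.
have av : a != v by apply: contraNneq et => av; rewrite -av.
have bu : b != u by apply: contraNneq et => bu; rewrite setUC -bu.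
suff -> : cut_edges t = [set [set u; a]; [set v; b]].
  rewrite cards2; suff -> : [set u; a] != [set v; b] by [].
  apply: contraNneq bu => ua_vb; have : u \in [set v; b] by rewrite -ua_vb set21.
  by rewrite !inE (negbTE uv) eq_sym.
apply/setP => f; rewrite in_set in_set2; apply/idP/idP.
- case/andP=> /incident_once_set2 [c /andP [cu cv] [-> | ->]] /andP [ct].
  + rewrite joins_componentsE => nc.
    by rewrite (tree_cut_edge_uniq tt uat ua na ct _ nc) ?eqxx // eq_sym.
  + rewrite joins_componentsE linked_sym => nc.
    by rewrite (tree_cut_edge_uniq tt vbt vb nb ct _ nc) ?eqxx ?orbT // eq_sym.
- case/orP=> /eqP ->.
  + by rewrite incident_once_u eq_sym ua av uat joins_componentsE na.
  + by rewrite incident_once_v bu eq_sym vb vbt joins_componentsE linked_sym nb.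
Qed.

Lemma reconnecting_edgesE t : spanning_tree t -> e \in t ->
  reconnecting_edges t =
  [set (if linked (t :\ e) u w then [set v; w] else [set u; w]) | w in ~: e].
Proof.
move=> tt et; set s := t :\ e.
have nuv : ~~ linked s u v by rewrite -joins_componentsE; apply: tree_edge_joins.
apply/setP => f; rewrite in_set; apply/andP/imsetP => [[fI jf] | [w]].
- have [c cuv [fE | fE]] := incident_once_set2 fI; subst f; exists c;
    rewrite ?inE ?negb_or // -/s; rewrite joins_componentsE in jf.
    by rewrite (negbTE jf).
  have := linked_setD1_ends v (tree_linked u c tt).
  by rewrite -/s (negbTE jf) orbF => ->.
- rewrite in_setC in_set2 negb_or => /andP [wu wv] ->; case: ifP => uw.
    rewrite incident_once_v wu wv joins_componentsE; split=> //; apply: contra nuv => vw.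
    by rewrite (connect_trans uw) // linked_sym.
  by rewrite incident_once_u wu wv joins_componentsE uw.
Qed.

Lemma card_reconnecting_edges t : spanning_tree t -> e \in t ->
  #|reconnecting_edges t| = (n - 2)%N.
Proof.
move=> tt et; rewrite reconnecting_edgesE // card_in_imset.
  by have := cardsC e; rewrite cards2 uv card_ord /=; lia.
move=> w1 w2; rewrite !inE !negb_or => /andP [w1u w1v] /andP [w2u w2v] w12.
have : w1 \in (if linked (t :\ e) u w2 then [set v; w2] else [set u; w2]).
  by rewrite -w12; case: ifP; rewrite set22.
by case: ifP; rewrite !inE ?(negbTE w1u) ?(negbTE w1v) => _ /eqP.
Qed.

End CutAndReconnect.

Lemma card_dep_pairs (T1 T2 : finType) (A : {set T1}) (B : T1 -> {set T2}) :
  #|[set p : T1 * T2 | (p.1 \in A) && (p.2 \in B p.1)]| = \sum_(x in A) #|B x|.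
Proof.
rewrite -sum1_card (eq_bigl (fun p => (p.1 \in A) && (p.2 \in B p.1))) => [|p]; last first.
  by rewrite inE.
rewrite -(pair_big_dep (mem A) (fun x => mem (B x)) (fun _ _ => 1%N)) /=.
by apply: eq_bigr => x _; rewrite sum1_card.
Qed.

Definition no_edge_event (n : nat) (F : {set {set 'I_n}}) : {set {set {set 'I_n}}} :=
  \bigcap_(j in F) ~: edge_event j.

Lemma in_no_edge_event n (F t : {set {set 'I_n}}) :
  (t \in no_edge_event F) = [forall j in F, j \notin t].
Proof. by apply/bigcapP/forall_inP => tF j /tF; rewrite !inE. Qed.

Lemma edge_eventI_no_edge_event n (F : {set {set 'I_n}}) e :
  e \in F -> edge_event e :&: no_edge_event F = set0.
Proof.
move=> eF; apply/setP => t; rewrite in_setI in_set0 in_no_edge_event inE.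
by apply/negP => /andP [et /forall_inP /(_ _ eF)]; rewrite et.
Qed.

Lemma no_edge_event0 n : no_edge_event (set0 : {set {set 'I_n}}) = setT.
Proof. by rewrite /no_edge_event big_set0. Qed.

Lemma no_edge_event_exchange n (F t : {set {set 'I_n}}) f g :
  t \in no_edge_event F -> g \notin F -> g |: t :\ f \in no_edge_event F.
Proof.
rewrite !in_no_edge_event => /forall_inP tF gF; apply/forall_inP => j jF.
rewrite !inE negb_or negb_and (tF j jF) orbT andbT.
by apply: contraNneq gF => <-.
Qed.

Section ExchangeCount.
Variables (n : nat) (u v : 'I_n) (F : {set {set 'I_n}}).
Hypothesis uv : u != v.
Hypothesis F_far : {in F, forall j : {set 'I_n}, (u \notin j) && (v \notin j)}.
Implicit Types (t : {set {set 'I_n}}) (f : {set 'I_n}).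

Local Notation e := [set u; v].
Local Notation X := (no_edge_event F :&: spanning_trees n).

Lemma incident_once_notin_F f : f \in incident_once u v -> f \notin F.
Proof.
by case/(incident_once_set2 uv) => c _ [-> | ->]; apply/negP => /F_far; rewrite !inE eqxx /= ?andbF.
Qed.

Lemma edge_notin_F : e \notin F.
Proof. by apply/negP => /F_far; rewrite !inE eqxx. Qed.

Definition cut_pairs :=
  [set p | (p.1 \in X :\: edge_event e) && (p.2 \in cut_edges u v p.1)].

Definition reconnecting_pairs :=
  [set p | (p.1 \in X :&: edge_event e) && (p.2 \in reconnecting_edges u v p.1)].

Lemma in_cut_pairs t f : ((t, f) \in cut_pairs) =
  [&& e \notin t, t \in no_edge_event F, spanning_tree t, f \in incident_once u v,
      f \in t & joins_components (t :\ f) e].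
Proof. by rewrite !inE -!andbA. Qed.

Lemma in_reconnecting_pairs t f : ((t, f) \in reconnecting_pairs) =
  [&& t \in no_edge_event F, spanning_tree t, e \in t, f \in incident_once u v
    & joins_components (t :\ e) f].
Proof. by rewrite !inE -!andbA. Qed.

Lemma cut_pair_exchange t f : (t, f) \in cut_pairs ->
  (e |: t :\ f, f) \in reconnecting_pairs /\ f |: (e |: t :\ f) :\ e = t.
Proof.
rewrite in_cut_pairs => /and5P [et tF tt fI /andP [ft jf]].
have ee : edge_of_Kn e by rewrite edge_of_Kn_set2.
have [tt' _ jf' tK] := tree_exchange_reversible tt ft ee et jf.
split=> //; rewrite in_reconnecting_pairs tt' jf' fI setU11 andbT.
by rewrite no_edge_event_exchange // edge_notin_F.
Qed.

Lemma reconnecting_pair_exchange t f : (t, f) \in reconnecting_pairs ->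
  (f |: t :\ e, f) \in cut_pairs /\ e |: (f |: t :\ e) :\ f = t.
Proof.
rewrite in_reconnecting_pairs => /and5P [tF tt et fI jf].
have ef : edge_of_Kn f by move: fI; rewrite inE => /andP [].
have fe : f != e by apply: contraNneq (edge_notin_incident_once u v) => <-.
have ft : f \notin t by move: (joins_components_notin ef jf); rewrite in_setD1 fe.
have [tt' et' je tK] := tree_exchange_reversible tt et ef ft jf.
split=> //; rewrite in_cut_pairs tt' et' je fI setU11 andbT.
by rewrite no_edge_event_exchange // incident_once_notin_F.
Qed.

Lemma card_cut_pairs : #|cut_pairs| = (#|X :\: edge_event e| * 2)%N.
Proof.
rewrite card_dep_pairs -sum_nat_const; apply: eq_bigr => t.
by rewrite !inE => /and3P [et _ tt]; apply: card_cut_edges.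
Qed.

Lemma card_reconnecting_pairs : #|reconnecting_pairs| = (#|X :&: edge_event e| * (n - 2))%N.
Proof.
rewrite card_dep_pairs -sum_nat_const; apply: eq_bigr => t.
by rewrite !inE => /andP [/andP [_ tt] et]; apply: card_reconnecting_edges.
Qed.

Lemma card_cut_pairs_reconnecting : #|cut_pairs| = #|reconnecting_pairs|.
Proof.
pose exchange (p : {set {set 'I_n}} * {set 'I_n}) := (e |: p.1 :\ p.2, p.2).
have exchange_inj : {in cut_pairs &, injective exchange}.
  move=> [t f] [t' f'] /cut_pair_exchange [_ tK] /cut_pair_exchange [_ t'K] [tt' ff'].
  by subst f'; rewrite -tK tt' t'K.
rewrite -(card_in_imset exchange_inj); apply: eq_card => -[t f].
apply/imsetP/idP => [[[t0 f0] /cut_pair_exchange [? _] ->] // |].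
by case/reconnecting_pair_exchange => cp tK; exists (f |: t :\ e, f); rewrite // /exchange /= tK.
Qed.

Lemma card_trees_through_edge : (n * #|edge_event e :&: X| = 2 * #|X|)%N.
Proof.
have n_gt1 : (1 < n)%N.
  by have := ltn_ord u; have := ltn_ord v; move: uv; rewrite -(inj_eq val_inj) /=; lia.
have := card_cut_pairs_reconnecting; rewrite card_cut_pairs card_reconnecting_pairs => E.
rewrite setIC -(cardsID (edge_event e) X).
set Z := #|X :&: _|; set Y := #|X :\: _|.
by rewrite -[n in (n * Z)%N](subnKC n_gt1) mulnDl (mulnC (n - 2)) -E; lia.
Qed.

End ExchangeCount.

Local Open Scope ring_scope.

Lemma Pr_cond (Om : finType) (S A B : {set Om}) :
  Pr S (A :&: B) / Pr S B = #|A :&: B :&: S|%:R / #|B :&: S|%:R.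
Proof.
rewrite /Pr; have [-> | S0] := eqVneq S set0; first by rewrite !setI0 cards0 !mul0r.
by rewrite invf_div mulrA mulfVK // pnatr_eq0 cards_eq0.
Qed.

Lemma Pr_neq0 (Om : finType) (S A : {set Om}) :
  Pr S A != 0 -> (#|A :&: S| != 0)%N && (#|S| != 0)%N.
Proof.
rewrite /Pr; apply: contraNT => /nandP [] /negbNE /eqP ->.
  by rewrite mul0r.
by rewrite invr0 mulr0.
Qed.

Lemma eq_ratio_nat (a b k m : nat) : (k * a = m * b)%N -> (b != 0)%N -> (m != 0)%N ->
  a%:R / b%:R = m%:R / k%:R :> rat.
Proof.
move=> E b0 m0; have k0 : (k != 0)%N.
  by apply: contraNneq b0 => k0; move: E; rewrite k0 => /esym/eqP; rewrite muln_eq0 (negbTE m0).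
by apply/eqP; rewrite eqr_div ?pnatr_eq0 // -!natrM eqr_nat mulnC E.
Qed.

Lemma not_line_adj_far n (u v : 'I_n) (j : {set 'I_n}) :
  [set u; v] != j -> ~~ line_adj [set u; v] j -> (u \notin j) && (v \notin j).
Proof.
rewrite /line_adj => ej; rewrite ej /= negbK setI_eq0 => dj.
by rewrite !(disjointFr dj) ?set21 ?set22.
Qed.

Theorem corollary3p4 (n : nat) (T : {set {set 'I_n}}) :
  spanning_tree T ->
  negative_dependency_graph (spanning_trees n) T (@line_adj n) (@edge_event n).
Proof.
move=> tT i iT Sj Sj_sub B PB.
have /cards2P [u [v [uv iE]]] := tree_edge tT iT; subst i.
have [iSj | iSj] := boolP ([set u; v] \in Sj).
  by rewrite edge_eventI_no_edge_event // /Pr set0I cards0 !mul0r; apply: divr_ge0.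
have Sj_far : {in Sj, forall j : {set 'I_n}, (u \notin j) && (v \notin j)}.
  move=> j jSj; have /setIdP [_] := subsetP Sj_sub j jSj.
  by apply: not_line_adj_far; apply: contraNneq iSj => ->.
have set0_far : {in set0, forall j : {set 'I_n}, (u \notin j) && (v \notin j)}.
  by move=> j; rewrite inE.
have trees := card_trees_through_edge uv set0_far.
rewrite no_edge_event0 !setTI in trees.
have /andP [BS0 S0] := Pr_neq0 PB.
rewrite Pr_cond -setIA (eq_ratio_nat (card_trees_through_edge uv Sj_far)) //.
by rewrite /Pr (eq_ratio_nat trees).
Qed.
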